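(* Let $(A,\cdot,[-,-,-],\varepsilon)$ be a ternary Leibniz-Poisson color algebra. Then $A\otimes A$, graded by $(A\otimes A)_c=\bigoplus_{a+b=c}A_a\otimes A_b$, is a Leibniz-Poisson color algebra with the operations defined on homogeneous tensors by $$(x\otimes y)\cdot(x'\otimes y'):=\varepsilon(y,x')\,(x\cdot x')\otimes(y\cdot y'),\qquad [x\otimes y,x'\otimes y']:=x\otimes[y,x',y']+\varepsilon(y,x'+y')\,[x,x',y']\otimes y,$$ extended bilinearly.
   Context: $G$ is an abelian group, $\mathbb{K}$ a field of characteristic $\neq 2$, $\mathcal{H}(V)$ the homogeneous elements of a $G$-graded space $V$; even maps preserve degree. A skew-symmetric bicharacter $\varepsilon:G\times G\to\mathbb{K}^*$ satisfies $\varepsilon(a,b)\varepsilon(b,a)=1$, $\varepsilon(a,b+c)=\varepsilon(a,b)\varepsilon(a,c)$, $\varepsilon(a+b,c)=\varepsilon(a,c)\varepsilon(b,c)$; $\varepsilon(x,y)$ means $\varepsilon$ of the degrees. A Leibniz-Poisson color algebra $(P,\cdot,[-,-],\varepsilon)$ is a $G$-graded space with even bilinear maps $\cdot$ and $[-,-]$ such that $(P,\cdot)$ is associative, $[[x,y],z]=[x,[y,z]]+\varepsilon(y,z)[[x,z],y]$, and $[x\cdot y,z]=x\cdot[y,z]+\varepsilon(y,z)[x,z]\cdot y$ for all homogeneous $x,y,z$. A ternary Leibniz-Poisson color algebra $(A,\cdot,[-,-,-],\varepsilon)$ is a $G$-graded space with an even associative product $\cdot$ and an even trilinear $[-,-,-]$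 such that $[[x,y,z],t,u]=[x,y,[z,t,u]]+\varepsilon(z,t+u)[x,[y,t,u],z]+\varepsilon(y+z,t+u)[[x,t,u],y,z]$ and $[x\cdot y,z,t]=x\cdot[y,z,t]+\varepsilon(y,z+t)[x,z,t]\cdot y$ for all homogeneous $x,y,z,t,u$. *)

From HB Require Import structures.
From mathcomp Require Import all_boot all_algebra.
Set Implicit Arguments. Unset Strict Implicit. Unset Printing Implicit Defensive.
Import GRing.Theory.
Local Open Scope ring_scope.

Section ColorDefs.
Variables (G : zmodType) (K : fieldType).

Definition skew_bichar (eps : G -> G -> K) : Prop :=
  (forall a b, eps a b * eps b a = 1) /\
  (forall a b c, eps a (b + c) = eps a b * eps a c) /\
  (forall a b c, eps (a + b) c = eps a c * eps b c).

Definition klinear (U W : lmodType K) (g : U -> W) : Prop :=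
  forall (k : K) x y, g (k *: x + y) = k *: g x + g y.

Definition kbilinear (U V W : lmodType K) (f : U -> V -> W) : Prop :=
  (forall (k : K) x x' y, f (k *: x + x') y = k *: f x y + f x' y) /\
  (forall (k : K) x y y', f x (k *: y + y') = k *: f x y + f x y').

Definition ktrilinear (V : lmodType K) (f : V -> V -> V -> V) : Prop :=
  (forall (k : K) x x' y z, f (k *: x + x') y z = k *: f x y z + f x' y z) /\
  (forall (k : K) x y y' z, f x (k *: y + y') z = k *: f x y z + f x y' z) /\
  (forall (k : K) x y z z', f x y (k *: z + z') = k *: f x y z + f x y z').

(* A G-grading of V: H g is the subspace V_g of homogeneous elements of
   degree g, and V = (+)_g V_g (every element is a finite sum of homogeneous
   components, and the sum of the V_g is direct). *)
Definition is_grading (V : lmodType K) (H : G -> V -> Prop) : Prop :=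
  [/\ forall g, H g 0 /\ (forall (k : K) x y, H g x -> H g y -> H g (k *: x + y)),
      forall v, exists (s : seq G) (f : G -> V),
          [/\ uniq s, forall g, H g (f g) & v = \sum_(g <- s) f g]
    & forall (s : seq G) (f : G -> V), uniq s -> (forall g, H g (f g)) ->
          \sum_(g <- s) f g = 0 -> forall g, g \in s -> f g = 0].

Definition even2 (V : lmodType K) (H : G -> V -> Prop) (m : V -> V -> V) :=
  forall a b x y, H a x -> H b y -> H (a + b) (m x y).

Definition even3 (V : lmodType K) (H : G -> V -> Prop) (m : V -> V -> V -> V) :=
  forall a b c x y z, H a x -> H b y -> H c z -> H (a + b + c) (m x y z).

Record LPcolor (V : lmodType K) (H : G -> V -> Prop) (eps : G -> G -> K)
    (mul br : V -> V -> V) : Prop := {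
  lp_grading : is_grading H;
  lp_mul_bilin : kbilinear mul;
  lp_br_bilin : kbilinear br;
  lp_mul_even : even2 H mul;
  lp_br_even : even2 H br;
  lp_mul_assoc : forall x y z, mul (mul x y) z = mul x (mul y z);
  lp_leibniz : forall a b c x y z, H a x -> H b y -> H c z ->
      br (br x y) z = br x (br y z) + eps b c *: br (br x z) y;
  lp_poisson : forall a b c x y z, H a x -> H b y -> H c z ->
      br (mul x y) z = mul x (br y z) + eps b c *: mul (br x z) y
}.

Record TLPcolor (A : lmodType K) (H : G -> A -> Prop) (eps : G -> G -> K)
    (mul : A -> A -> A) (br3 : A -> A -> A -> A) : Prop := {
  tlp_grading : is_grading H;
  tlp_mul_bilin : kbilinear mul;
  tlp_br_trilin : ktrilinear br3;
  tlp_mul_even : even2 H mul;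
  tlp_br_even : even3 H br3;
  tlp_mul_assoc : forall x y z, mul (mul x y) z = mul x (mul y z);
  tlp_leibniz : forall a b c d e x y z t u,
      H a x -> H b y -> H c z -> H d t -> H e u ->
      br3 (br3 x y z) t u = br3 x y (br3 z t u)
        + eps c (d + e) *: br3 x (br3 y t u) z
        + eps (b + c) (d + e) *: br3 (br3 x t u) y z;
  tlp_poisson : forall a b c d x y z t,
      H a x -> H b y -> H c z -> H d t ->
      br3 (mul x y) z t = mul x (br3 y z t) + eps b (c + d) *: mul (br3 x z t) y
}.

Definition is_tensor (A T : lmodType K) (t : A -> A -> T) : Prop :=
  [/\ kbilinear t,
      forall (W : lmodType K) (f : A -> A -> W), kbilinear f ->
        exists g : T -> W, klinear g /\ forall x y, g (t x y) = f x y
    & forall (W : lmodType K) (g1 g2 : T -> W), klinear g1 -> klinear g2 ->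
        (forall x y, g1 (t x y) = g2 (t x y)) -> forall v, g1 v = g2 v].

Definition tensor_grading (A T : lmodType K) (H : G -> A -> Prop)
    (t : A -> A -> T) : G -> T -> Prop :=
  fun c v => exists (n : nat) (xs ys : 'I_n -> A) (da db : 'I_n -> G),
    (forall i, [/\ H (da i) (xs i), H (db i) (ys i) & da i + db i = c]) /\
    v = \sum_(i < n) t (xs i) (ys i).

End ColorDefs.

From HB Require Import structures.
From mathcomp Require Import all_boot all_algebra ring.
From Stdlib Require Import ClassicalEpsilon.
Import GRing.Theory.
Local Open Scope ring_scope.
Set Implicit Arguments. Unset Strict Implicit. Unset Printing Implicit Defensive.

(* Both operations are prescribed on pure tensors of homogeneous elements.
   Splitting arbitrary elements of A into homogeneous components turns the
   degree-dependent signs into multilinear expressions, so the universal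
   property of A (x) A yields bilinear maps.  Applied to the span of the pure
   homogeneous tensors, the universal property also shows that this span is
   everything, and a degree projection built in the same way shows that the
   graded pieces form a direct sum.  All axioms are multilinear, so it suffices
   to check them on pure homogeneous tensors, where they follow from the
   corresponding axioms of A and from eps being a skew-symmetric bicharacter:
   each side of the Leibniz identity expands into eight tensors, matched up
   using the ternary Leibniz rule in both tensor factors. *)

Lemma sum_if_mem (I : eqType) (V : nmodType) (s L : seq I) (f : I -> V) :
  uniq s -> uniq L -> {subset s <= L} ->
  \sum_(i <- L) (if i \in s then f i else 0) = \sum_(i <- s) f i.
Proof.
move=> us uL sL; rewrite -big_mkcond /= -big_filter; apply: perm_big.
apply: uniq_perm; rewrite ?filter_uniq // => x.
by rewrite mem_filter; case xs: (x \in s) => //=; rewrite sL.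
Qed.

Section KLinear.
Variable K : fieldType.
Implicit Types U V W : lmodType K.

Lemma klinear0 U W (g : U -> W) : klinear g -> g 0 = 0.
Proof.
move=> lg; apply: (@addrI _ (g 0)); rewrite addr0.
by have := lg 1 0 0; rewrite !scale1r addr0.
Qed.

Lemma klinearD U W (g : U -> W) x y : klinear g -> g (x + y) = g x + g y.
Proof. by move=> lg; have := lg 1 x y; rewrite !scale1r. Qed.

Lemma klinearZ U W (g : U -> W) k x : klinear g -> g (k *: x) = k *: g x.
Proof. by move=> lg; rewrite -[k *: x]addr0 lg (klinear0 lg) addr0. Qed.

Lemma klinear_sum U W (g : U -> W) (I : Type) (r : seq I) (P : pred I) F :
  klinear g -> g (\sum_(i <- r | P i) F i) = \sum_(i <- r | P i) g (F i).
Proof.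
move=> lg; elim/big_rec2: _ => [|i y1 y2 _ <-]; [exact: klinear0 | exact: klinearD].
Qed.

Lemma klinear_comp U V W (f : V -> W) (g : U -> V) :
  klinear f -> klinear g -> klinear (fun u => f (g u)).
Proof. by move=> lf lg k x y; rewrite lg lf. Qed.

Lemma klinear_scale U W (g : U -> W) c : klinear g -> klinear (fun u => c *: g u).
Proof. by move=> lg k x y; rewrite lg scalerDr !scalerA mulrC. Qed.

Lemma klinear_add U W (f g : U -> W) :
  klinear f -> klinear g -> klinear (fun u => f u + g u).
Proof. by move=> lf lg k x y; rewrite lf lg scalerDr addrACA. Qed.

Lemma kbilinear_linl U V W (f : U -> V -> W) y : kbilinear f -> klinear (f^~ y).
Proof. by case=> lf _ k x x'; exact: lf. Qed.

Lemma kbilinear_linr U V W (f : U -> V -> W) x : kbilinear f -> klinear (f x).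
Proof. by case=> _ lf k y y'; exact: lf. Qed.

Lemma kbilinearP U V W (f : U -> V -> W) :
  (forall y, klinear (f^~ y)) -> (forall x, klinear (f x)) -> kbilinear f.
Proof. by move=> lf1 lf2; split=> k x x' y; [exact: lf1 | exact: lf2]. Qed.

Section Trilinear.
Variables (V : lmodType K) (F : V -> V -> V -> V).

Lemma ktrilinearP : (forall y z, klinear (fun x => F x y z)) ->
  (forall x z, klinear (fun y => F x y z)) -> (forall x y, klinear (F x y)) ->
  ktrilinear F.
Proof. by move=> l1 l2 l3; split; [|split] => k *; [exact: l1|exact: l2|exact: l3]. Qed.

Hypothesis lF : ktrilinear F.

Lemma ktrilinear_lin1 y z : klinear (fun x => F x y z).
Proof. by case: lF => l1 _ k x x'; exact: l1. Qed.
Lemma ktrilinear_lin2 x z : klinear (fun y => F x y z).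
Proof. by case: lF => _ [l2 _] k y y'; exact: l2. Qed.
Lemma ktrilinear_lin3 x y : klinear (F x y).
Proof. by case: lF => _ [_ l3] k z z'; exact: l3. Qed.

End Trilinear.

Section TrilinearComp.
Variables (V : lmodType K) (f g : V -> V -> V).
Hypotheses (lf : kbilinear f) (lg : kbilinear g).

Lemma ktrilinear_compl : ktrilinear (fun u v w => f (g u v) w).
Proof.
apply: ktrilinearP => [v w|u w|u v]; last exact: kbilinear_linr.
  by apply: klinear_comp (kbilinear_linl _ lf) (kbilinear_linl _ lg).
by apply: klinear_comp (kbilinear_linl _ lf) (kbilinear_linr _ lg).
Qed.

Lemma ktrilinear_compr : ktrilinear (fun u v w => f u (g v w)).
Proof.
apply: ktrilinearP => [v w|u w|u v]; first exact: kbilinear_linl.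
  by apply: klinear_comp (kbilinear_linr _ lf) (kbilinear_linl _ lg).
by apply: klinear_comp (kbilinear_linr _ lf) (kbilinear_linr _ lg).
Qed.

Lemma ktrilinear_compl_swap : ktrilinear (fun u v w => f (g u w) v).
Proof.
apply: ktrilinearP => [v w|u w|u v]; last 2 first.
- exact: kbilinear_linr.
- by apply: klinear_comp (kbilinear_linl _ lf) (kbilinear_linr _ lg).
by apply: klinear_comp (kbilinear_linl _ lf) (kbilinear_linl _ lg).
Qed.

End TrilinearComp.

Lemma ktrilinear_addZ (V : lmodType K) (F1 F2 : V -> V -> V -> V) c :
  ktrilinear F1 -> ktrilinear F2 ->
  ktrilinear (fun u v w => F1 u v w + c *: F2 u v w).
Proof.
move=> l1 l2; apply: ktrilinearP => *; apply: klinear_add.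
- exact: ktrilinear_lin1.
- exact/klinear_scale/ktrilinear_lin1.
- exact: ktrilinear_lin2.
- exact/klinear_scale/ktrilinear_lin2.
- exact: ktrilinear_lin3.
- exact/klinear_scale/ktrilinear_lin3.
Qed.

End KLinear.

Section GradedSums.
Variables (G : zmodType) (K : fieldType) (V : lmodType K) (H : G -> V -> Prop).

Definition graded_sum (v : V) := exists (s : seq G) (f : G -> V),
  [/\ uniq s, forall g, H g (f g) & v = \sum_(g <- s) f g].

Hypotheses (H0 : forall g, H g 0)
  (HL : forall g k x y, H g x -> H g y -> H g (k *: x + y)).

Lemma graded_sum_homog g v : H g v -> graded_sum v.
Proof.
move=> Hv; exists [:: g], (fun h => if h == g then v else 0).
split=> //; last by rewrite big_seq1 eqxx.
by move=> h; case: eqP => [->|_].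
Qed.

Lemma graded_sum0 : graded_sum 0.
Proof. by exists [::], (fun _ => 0); rewrite big_nil. Qed.

Lemma graded_sumL k u v : graded_sum u -> graded_sum v -> graded_sum (k *: u + v).
Proof.
move=> [s1 [f1 [u1 h1 e1]]] [s2 [f2 [u2 h2 e2]]].
pose L := undup (s1 ++ s2).
pose fs (s : seq G) (f : G -> V) g := if g \in s then f g else 0.
have sL1 : {subset s1 <= L} by move=> z zs; rewrite mem_undup mem_cat zs.
have sL2 : {subset s2 <= L} by move=> z zs; rewrite mem_undup mem_cat zs orbT.
exists L, (fun g => k *: fs s1 f1 g + fs s2 f2 g); split; first exact: undup_uniq.
  by move=> g; apply: HL; rewrite /fs; case: ifP.
by rewrite big_split /= -scaler_sumr !sum_if_mem ?undup_uniq -?e1 -?e2.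
Qed.

End GradedSums.

Section Grading.
Variables (G : zmodType) (K : fieldType) (A : lmodType K) (HA : G -> A -> Prop).
Hypothesis gr : is_grading HA.

Lemma homog0 g : HA g 0.
Proof. by case: gr => h _ _; case: (h g). Qed.

Lemma homogL g k x y : HA g x -> HA g y -> HA g (k *: x + y).
Proof. by case: gr => h _ _; case: (h g) => _; apply. Qed.

Lemma homogZ g k x : HA g x -> HA g (k *: x).
Proof. by move=> hx; have := homogL k hx (homog0 g); rewrite addr0. Qed.

Lemma homog_decomp_unique (s : seq G) (f f' : G -> A) : uniq s ->
  (forall g, HA g (f g)) -> (forall g, HA g (f' g)) ->
  \sum_(g <- s) f g = \sum_(g <- s) f' g -> forall g, g \in s -> f g = f' g.
Proof.
move=> us hf hf' e g gs; apply/eqP; rewrite -subr_eq0; apply/eqP.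
case: gr => _ _ direct; apply: (direct s (fun g => f g - f' g)) => //.
  by move=> h; rewrite addrC -scaleN1r; apply: homogL.
by rewrite sumrB e subrr.
Qed.

Lemma homog_decomp_exists v : exists sf : seq G * (G -> A),
  [/\ uniq sf.1, forall g, HA g (sf.2 g) & v = \sum_(g <- sf.1) sf.2 g].
Proof. by case: gr => _ /(_ v) [s [f ?]] _; exists (s, f). Qed.

Definition decomp v :=
  proj1_sig (constructive_indefinite_description _ (homog_decomp_exists v)).

Lemma decompP v : [/\ uniq (decomp v).1, forall g, HA g ((decomp v).2 g)
  & v = \sum_(g <- (decomp v).1) (decomp v).2 g].
Proof.
exact: proj2_sig (constructive_indefinite_description _ (homog_decomp_exists v)).
Qed.

Definition degs v := (decomp v).1.

Definition hcomp g v := if g \in degs v then (decomp v).2 g else 0.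

Lemma degs_uniq v : uniq (degs v).
Proof. by case: (decompP v). Qed.

Lemma hcomp_homog g v : HA g (hcomp g v).
Proof. by rewrite /hcomp; case: ifP => _; [case: (decompP v) | exact: homog0]. Qed.

Lemma hcomp_notin g v : g \notin degs v -> hcomp g v = 0.
Proof. by rewrite /hcomp => /negbTE ->. Qed.

Lemma sum_hcomp (L : seq G) v : uniq L -> {subset degs v <= L} ->
  \sum_(g <- L) hcomp g v = v.
Proof. by move=> uL sL; rewrite sum_if_mem ?degs_uniq //; case: (decompP v). Qed.

Lemma hcompE (s : seq G) (f : G -> A) v g : uniq s -> (forall g, HA g (f g)) ->
  v = \sum_(g <- s) f g -> hcomp g v = if g \in s then f g else 0.
Proof.
move=> us hf ev; pose L := undup (s ++ degs v).
have uL : uniq L by apply: undup_uniq.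
have sL : {subset s <= L} by move=> x xs; rewrite mem_undup mem_cat xs.
have sL' : {subset degs v <= L} by move=> x xs; rewrite mem_undup mem_cat xs orbT.
have [gL|gL] := boolP (g \in L).
  apply: (@homog_decomp_unique L (hcomp^~ v) (fun g => if g \in s then f g else 0))
    => // [h|h|]; first exact: hcomp_homog.
    by case: ifP => _; [exact: hf | exact: homog0].
  by rewrite sum_hcomp // sum_if_mem.
rewrite hcomp_notin; last by apply: contra gL; apply: sL'.
by case: ifP => // /sL; rewrite (negbTE gL).
Qed.

Lemma hcomp_homogE a x g : HA a x -> hcomp g x = if g == a then x else 0.
Proof.
move=> hx; rewrite (@hcompE [:: a] (fun g => if g == a then x else 0) x g) //.
- by rewrite mem_seq1; case: eqP.
- by move=> h; case: eqP => [->|_]; [exact: hx | exact: homog0].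
by rewrite big_seq1 eqxx.
Qed.

Lemma klinear_hcomp g : klinear (hcomp g).
Proof.
move=> k x y; pose L := undup (degs x ++ degs y).
have sLx : {subset degs x <= L} by move=> z zs; rewrite mem_undup mem_cat zs.
have sLy : {subset degs y <= L} by move=> z zs; rewrite mem_undup mem_cat zs orbT.
rewrite (@hcompE L (fun g => k *: hcomp g x + hcomp g y)) ?undup_uniq //.
- case: ifP => // gL; rewrite !hcomp_notin ?scaler0 ?addr0 //.
    by apply/negP => /sLy; rewrite gL.
  by apply/negP => /sLx; rewrite gL.
- by move=> h; apply: homogL; apply: hcomp_homog.
by rewrite big_split /= -scaler_sumr !sum_hcomp ?undup_uniq.
Qed.

Definition graded_ext (W : lmodType K) (phi : G -> A -> W) (v : A) : W :=
  \sum_(g <- degs v) phi g (hcomp g v).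

Section GradedExtension.
Variables (W : lmodType K) (phi : G -> A -> W).
Hypothesis lphi : forall g, klinear (phi g).

Lemma graded_extE v (L : seq G) : uniq L -> {subset degs v <= L} ->
  graded_ext phi v = \sum_(g <- L) phi g (hcomp g v).
Proof.
move=> uL sL; rewrite /graded_ext -(sum_if_mem _ (degs_uniq v) uL sL).
apply: eq_bigr => g _; case: ifP => // /negbT gs.
by rewrite hcomp_notin // (klinear0 (lphi g)).
Qed.

Lemma graded_ext_homog a x : HA a x -> graded_ext phi x = phi a x.
Proof.
move=> hx; pose L := undup (a :: degs x).
have sL : {subset degs x <= L} by move=> z zs; rewrite mem_undup in_cons zs orbT.
rewrite (graded_extE (undup_uniq _) sL).
rewrite (eq_bigr (fun g => if g \in [:: a] then phi a x else 0)).
  rewrite sum_if_mem ?big_seq1 ?undup_uniq // => z; rewrite mem_seq1 => /eqP ->.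
  by rewrite mem_undup mem_head.
move=> g _; rewrite (hcomp_homogE g hx) mem_seq1; case: eqP => [->|] //.
by rewrite (klinear0 (lphi g)).
Qed.

Lemma klinear_graded_ext : klinear (graded_ext phi).
Proof.
move=> k x y; pose L := undup (degs x ++ degs y ++ degs (k *: x + y)).
have uL : uniq L by apply: undup_uniq.
rewrite (@graded_extE x L) // ?(@graded_extE y L) // ?(@graded_extE (k *: x + y) L) //;
  try by move=> z zs; rewrite mem_undup !mem_cat zs ?orbT.
rewrite scaler_sumr -big_split /=; apply: eq_bigr => g _.
by rewrite klinear_hcomp lphi.
Qed.

End GradedExtension.

Lemma klinear_graded_ext_param (P W : lmodType K) (phi : P -> G -> A -> W) v :
  (forall g z, klinear (fun p => phi p g z)) -> klinear (fun p => graded_ext (phi p) v).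
Proof.
move=> lphi k p q; rewrite /graded_ext scaler_sumr -big_split /=.
by apply: eq_bigr => g _; exact: lphi.
Qed.

End Grading.

Section TensorUniversal.
Variables (K : fieldType) (A T : lmodType K) (t : A -> A -> T).
Hypothesis ten : is_tensor t.

Lemma tensor_linl y : klinear (t^~ y).
Proof. by case: ten => lt _ _; exact: kbilinear_linl. Qed.

Lemma tensor_linr x : klinear (t x).
Proof. by case: ten => lt _ _; exact: kbilinear_linr. Qed.

Lemma tensor_lift (W : lmodType K) (f : A -> A -> W) : kbilinear f ->
  exists g : T -> W, klinear g /\ forall x y, g (t x y) = f x y.
Proof. by case: ten => _ lift _; exact: lift. Qed.

Lemma tensor_ext (W : lmodType K) (g1 g2 : T -> W) : klinear g1 -> klinear g2 ->
  (forall x y, g1 (t x y) = g2 (t x y)) -> forall v, g1 v = g2 v.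
Proof. by case: ten => _ _ ext; exact: ext. Qed.

Lemma tensor_ext_lincomb (W : lmodType K) (g g1 g2 : T -> W) k :
  klinear g -> klinear g1 -> klinear g2 ->
  (forall x y, g (t x y) = k *: g1 (t x y) + g2 (t x y)) ->
  forall v, g v = k *: g1 v + g2 v.
Proof.
move=> lg lg1 lg2; apply: tensor_ext => //.
exact/klinear_add/lg2/klinear_scale.
Qed.

Definition kbibilinear (W : lmodType K) (F : A -> A -> A -> A -> W) :=
  (forall x' y', kbilinear (fun x y => F x y x' y')) /\
  (forall x y, kbilinear (F x y)).

(* Lift in the second pair of arguments first, then in the first one. *)
Lemma tensor_lift2 (W : lmodType K) (F : A -> A -> A -> A -> W) : kbibilinear F ->
  exists m : T -> T -> W, kbilinear m /\
    forall x y x' y', m (t x y) (t x' y') = F x y x' y'.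
Proof.
case=> lF lF'.
have [L hL] := choice _ (fun x' => choice _ (fun y' => tensor_lift (lF x' y'))).
have lL u : kbilinear (fun x' y' => L x' y' u).
  split=> k x1 x2 y; apply: tensor_ext_lincomb => [|||a b];
    try exact: (proj1 (hL _ _)); rewrite !(proj2 (hL _ _)).
    by case: (lF' a b) => + _; apply.
  by case: (lF' a b) => _; apply.
have [M hM] := choice _ (fun u => tensor_lift (lL u)).
exists M; split; last by move=> x y x' y'; rewrite (proj2 (hM _)) (proj2 (hL _ _)).
apply: kbilinearP => [v k u1 u2|u]; last exact: (proj1 (hM u)).
apply: (tensor_ext_lincomb (g := M (k *: u1 + u2))) => [|||a b];
  try exact: (proj1 (hM _)); rewrite !(proj2 (hM _)).
exact: (proj1 (hL a b)).
Qed.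

End TensorUniversal.

Section TensorInduction.
Variables (K : fieldType) (T : lmodType K) (Q : T -> Prop).
Hypotheses (Q0 : Q 0) (QL : forall k u v, Q u -> Q v -> Q (k *: u + v)).

Local Definition memQ (v : T) : bool :=
  if excluded_middle_informative (Q v) then true else false.

Local Lemma memQP v : reflect (Q v) (memQ v).
Proof. by rewrite /memQ; case: excluded_middle_informative => h; constructor. Qed.

Local Lemma memQ_submod_closed : submod_closed memQ.
Proof. by split=> [|k u v /memQP Qu /memQP Qv]; apply/memQP; [exact: Q0 | exact: QL]. Qed.

Local Definition subQ := {v : T | memQ v}.
HB.instance Definition _ := [isSub of subQ for @sval T memQ].
HB.instance Definition _ := [Choice of subQ by <:].
HB.instance Definition _ := GRing.SubChoice_isSubLmodule.Build K T memQ subQ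
  memQ_submod_closed.

(* The universal property applied to the subspace [Q] shows that [Q] is everything. *)
Lemma tensor_ind (A : lmodType K) (t : A -> A -> T) : is_tensor t ->
  (forall x y, Q (t x y)) -> forall v, Q v.
Proof.
move=> ten Qt.
pose f x y : subQ := exist _ (t x y) (introT (memQP _) (Qt x y)).
have lf : kbilinear f.
  by apply: kbilinearP => [y|x] k a b; apply: val_inj;
    rewrite linearP /=; [exact: tensor_linl | exact: tensor_linr].
have [g [lg gt]] := tensor_lift ten lf.
have valgE : forall v, val (g v) = v.
  apply: (@tensor_ext _ _ _ _ ten T (fun v => val (g v)) id) => [k a b|//|x y].
    by rewrite lg linearP.
  by rewrite gt.
by move=> v; rewrite -(valgE v); apply/memQP/(valP (g v)).
Qed.

End TensorInduction.

Definition ord_cat (X : Type) n1 n2 (f1 : 'I_n1 -> X) (f2 : 'I_n2 -> X)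
    (i : 'I_(n1 + n2)) : X :=
  match split i with inl j => f1 j | inr j => f2 j end.

Lemma ord_cat_lshift X n1 n2 f1 f2 j : @ord_cat X n1 n2 f1 f2 (lshift n2 j) = f1 j.
Proof. by rewrite /ord_cat (unsplitK (inl _ : 'I_n1 + 'I_n2)). Qed.

Lemma ord_cat_rshift X n1 n2 f1 f2 j : @ord_cat X n1 n2 f1 f2 (rshift n1 j) = f2 j.
Proof. by rewrite /ord_cat (unsplitK (inr _ : 'I_n1 + 'I_n2)). Qed.

Section TensorGrading.
Variables (G : zmodType) (K : fieldType) (A : lmodType K) (HA : G -> A -> Prop)
  (T : lmodType K) (t : A -> A -> T).
Hypotheses (gr : is_grading HA) (ten : is_tensor t).

(* [tensor_grading HA t c] is [tspan (fun a b => a + b = c)]. *)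
Definition tspan (R : G -> G -> Prop) (v : T) :=
  exists (n : nat) (xs ys : 'I_n -> A) (da db : 'I_n -> G),
    (forall i, [/\ HA (da i) (xs i), HA (db i) (ys i) & R (da i) (db i)]) /\
    v = \sum_(i < n) t (xs i) (ys i).

Lemma tspan0 R : tspan R 0.
Proof.
exists 0%N, (fun _ => 0), (fun _ => 0), (fun _ => 0), (fun _ => 0).
by split; [case | rewrite big_ord0].
Qed.

Lemma tspan_tensor (R : G -> G -> Prop) a b x y :
  HA a x -> HA b y -> R a b -> tspan R (t x y).
Proof.
move=> hx hy hR; exists 1%N, (fun _ => x), (fun _ => y), (fun _ => a), (fun _ => b).
by split; [|rewrite big_ord1].
Qed.

Lemma tspanL R k u v : tspan R u -> tspan R v -> tspan R (k *: u + v).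
Proof.
move=> [n1 [xs1 [ys1 [da1 [db1 [h1 ->]]]]]] [n2 [xs2 [ys2 [da2 [db2 [h2 ->]]]]]].
exists (n1 + n2)%N, (ord_cat (fun j => k *: xs1 j) xs2), (ord_cat ys1 ys2),
  (ord_cat da1 da2), (ord_cat db1 db2); split.
  move=> i; rewrite /ord_cat; case: (split i) => j; last exact: h2.
  by case: (h1 j) => hx hy hR; split=> //; apply: homogZ.
rewrite big_split_ord /= scaler_sumr; congr (_ + _); apply: eq_bigr => i _.
  by rewrite !ord_cat_lshift (klinearZ _ _ (tensor_linl ten _)).
by rewrite !ord_cat_rshift.
Qed.

Lemma tspanD R u v : tspan R u -> tspan R v -> tspan R (u + v).
Proof. by move=> hu hv; have := tspanL 1 hu hv; rewrite scale1r. Qed.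

Lemma tspan_sum R (I : Type) (r : seq I) (F : I -> T) :
  (forall i, tspan R (F i)) -> tspan R (\sum_(i <- r) F i).
Proof. by move=> hF; apply: (big_ind (tspan R)); [exact: tspan0 | exact: tspanD |]. Qed.

Lemma tspan_all v : tspan (fun _ _ => True) v.
Proof.
apply: (tensor_ind (tspan0 _) (@tspanL _) ten) => x y.
rewrite -(sum_hcomp (gr := gr) (degs_uniq gr x) (fun _ => id)).
rewrite -(sum_hcomp (gr := gr) (degs_uniq gr y) (fun _ => id)).
rewrite (klinear_sum _ _ _ (tensor_linl ten _)); apply: tspan_sum => a.
rewrite (klinear_sum _ _ _ (tensor_linr ten _)); apply: tspan_sum => b.
by apply: (tspan_tensor (a := a) (b := b)) => //; exact: hcomp_homog.
Qed.

Lemma tensor_grading0 c : tensor_grading HA t c 0.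
Proof. exact: (tspan0 (fun a b => a + b = c)). Qed.

Lemma tensor_gradingL c k u v : tensor_grading HA t c u -> tensor_grading HA t c v ->
  tensor_grading HA t c (k *: u + v).
Proof. exact: (@tspanL (fun a b => a + b = c)). Qed.

Lemma tensor_gradingD c u v : tensor_grading HA t c u -> tensor_grading HA t c v ->
  tensor_grading HA t c (u + v).
Proof. exact: (@tspanD (fun a b => a + b = c)). Qed.

Lemma tensor_gradingZ c k u : tensor_grading HA t c u -> tensor_grading HA t c (k *: u).
Proof. by move=> hu; have := tensor_gradingL k hu (tensor_grading0 c); rewrite addr0. Qed.

Lemma tensor_grading_tensor a b x y :
  HA a x -> HA b y -> tensor_grading HA t (a + b) (t x y).
Proof. by move=> hx hy; exact: (tspan_tensor (R := fun p q => p + q = a + b) hx hy). Qed.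

Lemma tensor_graded_sum v : graded_sum (tensor_grading HA t) v.
Proof.
have [n [xs [ys [da [db [h ->]]]]]] := tspan_all v.
apply: (big_ind (graded_sum _)); first exact: graded_sum0 tensor_grading0.
  move=> u w hu hw; have := graded_sumL tensor_grading0 tensor_gradingL 1 hu hw.
  by rewrite scale1r.
move=> i _; case: (h i) => hx hy _; apply: (graded_sum_homog tensor_grading0).
exact: tensor_grading_tensor hx hy.
Qed.

Lemma tensor_degree_projection : exists pi : G -> T -> T, forall c,
  klinear (pi c) /\ forall a b x y, HA a x -> HA b y ->
    pi c (t x y) = if c == a + b then t x y else 0.
Proof.
pose P c x y := graded_ext gr (fun a xa => t xa (hcomp gr (c - a) y)) x.
have lP c : kbilinear (P c).
  apply: kbilinearP => [y|x]; first by apply: klinear_graded_ext => a; exact: tensor_linl.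
  apply: klinear_graded_ext_param => a xa.
  exact: klinear_comp (tensor_linr ten _) (klinear_hcomp gr _).
have [pi hpi] := choice _ (fun c => tensor_lift ten (lP c)).
exists pi => c; split=> [|a b x y hx hy]; first exact: (proj1 (hpi c)).
rewrite (proj2 (hpi c)) /P (graded_ext_homog _ _ hx); last by move=> g; exact: tensor_linl.
rewrite (hcomp_homogE _ _ hy) subr_eq [b + a]addrC.
by case: ifP => //; rewrite (klinear0 (tensor_linr ten _)).
Qed.

Lemma tensor_grading_direct (s : seq G) (f : G -> T) : uniq s ->
  (forall g, tensor_grading HA t g (f g)) ->
  \sum_(g <- s) f g = 0 -> forall g, g \in s -> f g = 0.
Proof.
have [pi hpi] := tensor_degree_projection.
have piE c d v : tensor_grading HA t d v -> pi c v = if c == d then v else 0.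
  move=> [n [xs [ys [da [db [h ->]]]]]].
  rewrite (klinear_sum _ _ _ (proj1 (hpi c))); case: eqP => [->|ne].
    apply: eq_bigr => i _; case: (h i) => hx hy <-.
    by rewrite (proj2 (hpi _) _ _ _ _ hx hy) eqxx.
  apply: big1 => i _; case: (h i) => hx hy e.
  by rewrite (proj2 (hpi _) _ _ _ _ hx hy) e; case: eqP.
move=> us hf e g gs; have := congr1 (pi g) e.
rewrite (klinear0 (proj1 (hpi g))) (klinear_sum _ _ _ (proj1 (hpi g))).
rewrite (eq_bigr (fun c => if c \in [:: g] then f c else 0)); last first.
  by move=> c _; rewrite (piE _ _ _ (hf c)) mem_seq1 eq_sym.
by rewrite sum_if_mem ?big_seq1 // => z; rewrite mem_seq1 => /eqP ->.
Qed.

Lemma tensor_grading_is_grading : is_grading (tensor_grading HA t).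
Proof.
split; [|exact: tensor_graded_sum | exact: tensor_grading_direct].
by move=> c; split; [exact: tensor_grading0 | exact: tensor_gradingL].
Qed.

Lemma tensor_even2 (F : T -> T -> T) : kbilinear F ->
  (forall a1 b1 a2 b2 x1 y1 x2 y2, HA a1 x1 -> HA b1 y1 -> HA a2 x2 -> HA b2 y2 ->
    tensor_grading HA t (a1 + b1 + (a2 + b2)) (F (t x1 y1) (t x2 y2))) ->
  even2 (tensor_grading HA t) F.
Proof.
move=> lF hF a b X Y [n1 [xs1 [ys1 [da1 [db1 [h1 ->]]]]]].
move=> [n2 [xs2 [ys2 [da2 [db2 [h2 ->]]]]]].
pose R p q := p + q = a + b.
rewrite (klinear_sum _ _ _ (kbilinear_linl _ lF)); apply: (@tspan_sum R) => i.
rewrite (klinear_sum _ _ _ (kbilinear_linr _ lF)); apply: (@tspan_sum R) => j.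
case: (h1 i) (h2 j) => hx1 hy1 e1 [hx2 hy2 e2].
by rewrite /R -e1 -e2; exact: hF.
Qed.

Lemma tspan_trilinear_ext (F1 F2 : T -> T -> T -> T) (R1 R2 R3 : G -> G -> Prop) X Y Z :
  ktrilinear F1 -> ktrilinear F2 ->
  (forall a1 b1 a2 b2 a3 b3 x1 y1 x2 y2 x3 y3,
    HA a1 x1 -> HA b1 y1 -> HA a2 x2 -> HA b2 y2 -> HA a3 x3 -> HA b3 y3 ->
    R1 a1 b1 -> R2 a2 b2 -> R3 a3 b3 ->
    F1 (t x1 y1) (t x2 y2) (t x3 y3) = F2 (t x1 y1) (t x2 y2) (t x3 y3)) ->
  tspan R1 X -> tspan R2 Y -> tspan R3 Z -> F1 X Y Z = F2 X Y Z.
Proof.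
move=> lF1 lF2 hF [n1 [xs1 [ys1 [da1 [db1 [h1 ->]]]]]].
move=> [n2 [xs2 [ys2 [da2 [db2 [h2 ->]]]]]] [n3 [xs3 [ys3 [da3 [db3 [h3 ->]]]]]].
rewrite (klinear_sum _ _ _ (ktrilinear_lin1 lF1 _ _)).
rewrite (klinear_sum _ _ _ (ktrilinear_lin1 lF2 _ _)); apply: eq_bigr => i _.
rewrite (klinear_sum _ _ _ (ktrilinear_lin2 lF1 _ _)).
rewrite (klinear_sum _ _ _ (ktrilinear_lin2 lF2 _ _)); apply: eq_bigr => j _.
rewrite (klinear_sum _ _ _ (ktrilinear_lin3 lF1 _ _)).
rewrite (klinear_sum _ _ _ (ktrilinear_lin3 lF2 _ _)); apply: eq_bigr => k _.
by case: (h1 i) => *; case: (h2 j) => *; case: (h3 k) => *; apply: hF; eassumption.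
Qed.

Lemma tensor_grading_trilinear_ext (F1 F2 : T -> T -> T -> T) a b c X Y Z :
  ktrilinear F1 -> ktrilinear F2 ->
  (forall a1 b1 a2 b2 a3 b3 x1 y1 x2 y2 x3 y3,
    HA a1 x1 -> HA b1 y1 -> HA a2 x2 -> HA b2 y2 -> HA a3 x3 -> HA b3 y3 ->
    a2 + b2 = b -> a3 + b3 = c ->
    F1 (t x1 y1) (t x2 y2) (t x3 y3) = F2 (t x1 y1) (t x2 y2) (t x3 y3)) ->
  tensor_grading HA t a X -> tensor_grading HA t b Y -> tensor_grading HA t c Z ->
  F1 X Y Z = F2 X Y Z.
Proof.
move=> lF1 lF2 hF; apply: (tspan_trilinear_ext (R1 := fun p q => p + q = a)
  (R2 := fun p q => p + q = b) (R3 := fun p q => p + q = c)) => // *.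
by apply: hF; eassumption.
Qed.

End TensorGrading.

Section TensorOperations.
Variables (G : zmodType) (K : fieldType) (eps : G -> G -> K)
  (A : lmodType K) (HA : G -> A -> Prop)
  (mulA : A -> A -> A) (br3 : A -> A -> A -> A)
  (T : lmodType K) (t : A -> A -> T).
Hypotheses (tl : TLPcolor HA eps mulA br3) (ten : is_tensor t).

Let gr := tlp_grading tl.
Let mulA_l y := kbilinear_linl y (tlp_mul_bilin tl).
Let mulA_r x := kbilinear_linr x (tlp_mul_bilin tl).
Let br3_1 := ktrilinear_lin1 (tlp_br_trilin tl).
Let br3_2 := ktrilinear_lin2 (tlp_br_trilin tl).
Let br3_3 := ktrilinear_lin3 (tlp_br_trilin tl).
Let t_l := tensor_linl ten.
Let t_r := tensor_linr ten.

(* Degree-dependent signs are made multilinear by summing over homogeneous components. *)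
Definition tmul4 x y x' y' :=
  graded_ext gr (fun b yb => graded_ext gr (fun a' xa' =>
    eps b a' *: t (mulA x xa') (mulA yb y')) x') y.

Definition tbr4 x y x' y' :=
  t x (br3 y x' y') +
  graded_ext gr (fun b yb => graded_ext gr (fun a' xa' => graded_ext gr (fun b' yb' =>
    eps b (a' + b') *: t (br3 x xa' yb') yb) y') x') y.

Lemma kbibilinear_tmul4 : kbibilinear tmul4.
Proof.
split=> [x' y'|x y]; apply: kbilinearP.
- move=> y; apply: klinear_graded_ext_param => b yb.
  apply: klinear_graded_ext_param => a' xa'.
  exact/klinear_scale/(klinear_comp (t_l _) (mulA_l _)).
- move=> x; apply: klinear_graded_ext => b; apply: klinear_graded_ext_param => a' xa'.
  exact/klinear_scale/(klinear_comp (t_r _) (mulA_l _)).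
- move=> y'; apply: klinear_graded_ext_param => b yb; apply: klinear_graded_ext => a'.
  exact/klinear_scale/(klinear_comp (t_l _) (mulA_r _)).
- move=> x'; apply: klinear_graded_ext_param => b yb.
  apply: klinear_graded_ext_param => a' xa'.
  exact/klinear_scale/(klinear_comp (t_r _) (mulA_r _)).
Qed.

Lemma kbibilinear_tbr4 : kbibilinear tbr4.
Proof.
split=> [x' y'|x y]; apply: kbilinearP.
- move=> y; apply: klinear_add; first exact: t_l.
  apply: klinear_graded_ext_param => b yb.
  apply: klinear_graded_ext_param => a' xa'.
  apply: klinear_graded_ext_param => b' yb'.
  exact/klinear_scale/(klinear_comp (t_l _) (br3_1 _ _)).
- move=> x; apply: klinear_add; first exact: (klinear_comp (t_r _) (br3_1 _ _)).
  apply: klinear_graded_ext => b; apply: klinear_graded_ext_param => a' xa'.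
  by apply: klinear_graded_ext_param => b' yb'; exact/klinear_scale/t_r.
- move=> y'; apply: klinear_add; first exact: (klinear_comp (t_r _) (br3_2 _ _)).
  apply: klinear_graded_ext_param => b yb; apply: klinear_graded_ext => a'.
  apply: klinear_graded_ext_param => b' yb'.
  exact/klinear_scale/(klinear_comp (t_l _) (br3_2 _ _)).
- move=> x'; apply: klinear_add; first exact: (klinear_comp (t_r _) (br3_3 _ _)).
  apply: klinear_graded_ext_param => b yb.
  apply: klinear_graded_ext_param => a' xa'.
  apply: klinear_graded_ext => b'.
  exact/klinear_scale/(klinear_comp (t_l _) (br3_3 _ _)).
Qed.

Lemma tmul4_homog a b a' b' x y x' y' :
  HA a x -> HA b y -> HA a' x' -> HA b' y' ->
  tmul4 x y x' y' = eps b a' *: t (mulA x x') (mulA y y').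
Proof.
move=> hx hy hx' hy'; rewrite /tmul4 (graded_ext_homog _ _ hy); last first.
  move=> g; apply: klinear_graded_ext_param => a'' xa''.
  exact/klinear_scale/(klinear_comp (t_r _) (mulA_l _)).
rewrite (graded_ext_homog _ _ hx') // => g.
exact/klinear_scale/(klinear_comp (t_l _) (mulA_r _)).
Qed.

Lemma tbr4_homog a b a' b' x y x' y' :
  HA a x -> HA b y -> HA a' x' -> HA b' y' ->
  tbr4 x y x' y' = t x (br3 y x' y') + eps b (a' + b') *: t (br3 x x' y') y.
Proof.
move=> hx hy hx' hy'; rewrite /tbr4 (graded_ext_homog _ _ hy); last first.
  move=> g; apply: klinear_graded_ext_param => a'' xa''.
  by apply: klinear_graded_ext_param => b'' yb''; exact/klinear_scale/t_r.
rewrite (graded_ext_homog _ _ hx'); last first.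
  move=> g; apply: klinear_graded_ext_param => b'' yb''.
  exact/klinear_scale/(klinear_comp (t_l _) (br3_2 _ _)).
rewrite (graded_ext_homog _ _ hy') // => g.
exact/klinear_scale/(klinear_comp (t_l _) (br3_3 _ _)).
Qed.

Lemma tensor_mul_exists : exists mul : T -> T -> T, kbilinear mul /\
  forall a b a' b' x y x' y', HA a x -> HA b y -> HA a' x' -> HA b' y' ->
    mul (t x y) (t x' y') = eps b a' *: t (mulA x x') (mulA y y').
Proof.
have [mul [lmul mulE]] := tensor_lift2 ten kbibilinear_tmul4.
exists mul; split=> // a b a' b' x y x' y' hx hy hx' hy'.
by rewrite mulE (tmul4_homog hx hy hx' hy').
Qed.

Lemma tensor_br_exists : exists br : T -> T -> T, kbilinear br /\
  forall a b a' b' x y x' y', HA a x -> HA b y -> HA a' x' -> HA b' y' ->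
    br (t x y) (t x' y') = t x (br3 y x' y') + eps b (a' + b') *: t (br3 x x' y') y.
Proof.
have [br [lbr brE]] := tensor_lift2 ten kbibilinear_tbr4.
exists br; split=> // a b a' b' x y x' y' hx hy hx' hy'.
by rewrite brE (tbr4_homog hx hy hx' hy').
Qed.

End TensorOperations.

Section Bicharacter.
Variables (G : zmodType) (K : fieldType) (eps : G -> G -> K).
Hypothesis es : skew_bichar eps.

Lemma epsDr a b c : eps a (b + c) = eps a b * eps a c.
Proof. by case: es => _ []. Qed.

Lemma epsDl a b c : eps (a + b) c = eps a c * eps b c.
Proof. by case: es => _ []. Qed.

Lemma eps_neq0 a b : eps a b != 0.
Proof.
apply/eqP => e; have [skew _] := es; have := skew a b.
by rewrite e mul0r => /eqP; rewrite eq_sym oner_eq0.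
Qed.

Lemma epsV a b : eps b a = (eps a b)^-1.
Proof.
by case: es => skew _; apply: (mulfI (eps_neq0 a b)); rewrite skew mulfV ?eps_neq0.
Qed.

End Bicharacter.

Section TensorLPcolor.
Variables (G : zmodType) (K : fieldType) (eps : G -> G -> K)
  (A : lmodType K) (HA : G -> A -> Prop)
  (mulA : A -> A -> A) (br3 : A -> A -> A -> A)
  (T : lmodType K) (t : A -> A -> T) (mul br : T -> T -> T).
Hypotheses (es : skew_bichar eps) (tl : TLPcolor HA eps mulA br3) (ten : is_tensor t)
  (lmul : kbilinear mul) (lbr : kbilinear br).
Hypothesis mulE : forall a b a' b' x y x' y',
  HA a x -> HA b y -> HA a' x' -> HA b' y' ->
  mul (t x y) (t x' y') = eps b a' *: t (mulA x x') (mulA y y').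
Hypothesis brE : forall a b a' b' x y x' y',
  HA a x -> HA b y -> HA a' x' -> HA b' y' ->
  br (t x y) (t x' y') = t x (br3 y x' y') + eps b (a' + b') *: t (br3 x x' y') y.

Let mulA_even := tlp_mul_even tl.
Let br3_even := tlp_br_even tl.
Let tDl x1 x2 y : t (x1 + x2) y = t x1 y + t x2 y := klinearD _ _ (tensor_linl ten y).
Let tZl k x y : t (k *: x) y = k *: t x y := klinearZ _ _ (tensor_linl ten y).
Let tDr x y1 y2 : t x (y1 + y2) = t x y1 + t x y2 := klinearD _ _ (tensor_linr ten x).
Let tZr k x y : t x (k *: y) = k *: t x y := klinearZ _ _ (tensor_linr ten x).
Let brDl u1 u2 v : br (u1 + u2) v = br u1 v + br u2 v :=
  klinearD _ _ (kbilinear_linl v lbr).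
Let brZl k u v : br (k *: u) v = k *: br u v := klinearZ _ _ (kbilinear_linl v lbr).
Let brDr u v1 v2 : br u (v1 + v2) = br u v1 + br u v2 :=
  klinearD _ _ (kbilinear_linr u lbr).
Let brZr k u v : br u (k *: v) = k *: br u v := klinearZ _ _ (kbilinear_linr u lbr).
Let mulDl u1 u2 v : mul (u1 + u2) v = mul u1 v + mul u2 v :=
  klinearD _ _ (kbilinear_linl v lmul).
Let mulZl k u v : mul (k *: u) v = k *: mul u v := klinearZ _ _ (kbilinear_linl v lmul).
Let mulDr u v1 v2 : mul u (v1 + v2) = mul u v1 + mul u v2 :=
  klinearD _ _ (kbilinear_linr u lmul).
Let mulZr k u v : mul u (k *: v) = k *: mul u v := klinearZ _ _ (kbilinear_linr u lmul).

Lemma tensor_mul_assoc_pure a1 b1 a2 b2 a3 b3 x1 y1 x2 y2 x3 y3 :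
  HA a1 x1 -> HA b1 y1 -> HA a2 x2 -> HA b2 y2 -> HA a3 x3 -> HA b3 y3 ->
  mul (mul (t x1 y1) (t x2 y2)) (t x3 y3) = mul (t x1 y1) (mul (t x2 y2) (t x3 y3)).
Proof.
move=> hx1 hy1 hx2 hy2 hx3 hy3.
rewrite (mulE hx1 hy1 hx2 hy2) (mulE hx2 hy2 hx3 hy3) mulZl mulZr.
rewrite (mulE (mulA_even hx1 hx2) (mulA_even hy1 hy2) hx3 hy3).
rewrite (mulE hx1 hy1 (mulA_even hx2 hx3) (mulA_even hy2 hy3)).
by rewrite !(tlp_mul_assoc tl) !scalerA !(epsDl es, epsDr es); congr (_ *: _); ring.
Qed.

Lemma tensor_leibniz_pure a1 b1 a2 b2 a3 b3 x1 y1 x2 y2 x3 y3 :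
  HA a1 x1 -> HA b1 y1 -> HA a2 x2 -> HA b2 y2 -> HA a3 x3 -> HA b3 y3 ->
  br (br (t x1 y1) (t x2 y2)) (t x3 y3) =
  br (t x1 y1) (br (t x2 y2) (t x3 y3)) +
  eps (a2 + b2) (a3 + b3) *: br (br (t x1 y1) (t x3 y3)) (t x2 y2).
Proof.
move=> hx1 hy1 hx2 hy2 hx3 hy3.
rewrite (brE hx1 hy1 hx2 hy2) (brE hx2 hy2 hx3 hy3) (brE hx1 hy1 hx3 hy3).
rewrite brDl brZl (brE hx1 (br3_even hy1 hx2 hy2) hx3 hy3).
rewrite (brE (br3_even hx1 hx2 hy2) hy1 hx3 hy3).
rewrite brDr brZr (brE hx1 hy1 hx2 (br3_even hy2 hx3 hy3)).
rewrite (brE hx1 hy1 (br3_even hx2 hx3 hy3) hy2).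
rewrite brDl brZl (brE hx1 (br3_even hy1 hx3 hy3) hx2 hy2).
rewrite (brE (br3_even hx1 hx3 hy3) hy1 hx2 hy2).
rewrite (tlp_leibniz tl hy1 hx2 hy2 hx3 hy3) (tlp_leibniz tl hx1 hx2 hy2 hx3 hy3).
rewrite !(tDl, tDr, tZl, tZr, scalerDr, scalerA, addrA) [RHS](ACl (1*3*5*7*6*2*4*8)).
congr (_ + _ + _ + _ + _ + _ + _ + _); congr (_ *: _);
  rewrite ?(epsDl es) ?(epsDr es); try ring.
rewrite (epsV es a2 a3) (epsV es b2 a3) (epsV es a2 b3) (epsV es b2 b3).
by field; rewrite !eps_neq0.
Qed.

Lemma tensor_poisson_pure a1 b1 a2 b2 a3 b3 x1 y1 x2 y2 x3 y3 :
  HA a1 x1 -> HA b1 y1 -> HA a2 x2 -> HA b2 y2 -> HA a3 x3 -> HA b3 y3 ->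
  br (mul (t x1 y1) (t x2 y2)) (t x3 y3) =
  mul (t x1 y1) (br (t x2 y2) (t x3 y3)) +
  eps (a2 + b2) (a3 + b3) *: mul (br (t x1 y1) (t x3 y3)) (t x2 y2).
Proof.
move=> hx1 hy1 hx2 hy2 hx3 hy3.
rewrite (mulE hx1 hy1 hx2 hy2) (brE hx2 hy2 hx3 hy3) (brE hx1 hy1 hx3 hy3).
rewrite brZl (brE (mulA_even hx1 hx2) (mulA_even hy1 hy2) hx3 hy3).
rewrite mulDr mulZr (mulE hx1 hy1 hx2 (br3_even hy2 hx3 hy3)).
rewrite (mulE hx1 hy1 (br3_even hx2 hx3 hy3) hy2).
rewrite mulDl mulZl (mulE hx1 (br3_even hy1 hx3 hy3) hx2 hy2).
rewrite (mulE (br3_even hx1 hx3 hy3) hy1 hx2 hy2).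
rewrite (tlp_poisson tl hy1 hy2 hx3 hy3) (tlp_poisson tl hx1 hx2 hx3 hy3).
rewrite !(tDl, tDr, tZl, tZr, scalerDr, scalerA, addrA) [RHS](ACl (1*3*2*4)).
congr (_ + _ + _ + _); congr (_ *: _); rewrite ?(epsDl es) ?(epsDr es); try ring.
by rewrite (epsV es a2 a3) (epsV es a2 b3); field; rewrite !eps_neq0.
Qed.

Lemma tensor_LPcolor : LPcolor (tensor_grading HA t) eps mul br.
Proof.
have gr := tlp_grading tl.
split=> //; first exact: tensor_grading_is_grading.
- apply: (tensor_even2 gr ten lmul) => a1 b1 a2 b2 x1 y1 x2 y2 hx1 hy1 hx2 hy2.
  rewrite (mulE hx1 hy1 hx2 hy2) addrACA; apply: (tensor_gradingZ gr ten).
  exact: tensor_grading_tensor (mulA_even hx1 hx2) (mulA_even hy1 hy2).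
- apply: (tensor_even2 gr ten lbr) => a1 b1 a2 b2 x1 y1 x2 y2 hx1 hy1 hx2 hy2.
  rewrite (brE hx1 hy1 hx2 hy2); apply: (tensor_gradingD gr ten).
    rewrite (_ : a1 + b1 + _ = a1 + (b1 + a2 + b2)); last by rewrite !addrA.
    exact: tensor_grading_tensor hx1 (br3_even hy1 hx2 hy2).
  apply: (tensor_gradingZ gr ten).
  rewrite (_ : a1 + b1 + _ = a1 + a2 + b2 + b1);
    last by rewrite !addrA [RHS](ACl (1*4*2*3)).
  exact: tensor_grading_tensor (br3_even hx1 hx2 hy2) hy1.
- move=> X Y Z.
  apply: (tspan_trilinear_ext (ktrilinear_compl lmul lmul) (ktrilinear_compr lmul lmul)
    _ (tspan_all gr ten X) (tspan_all gr ten Y) (tspan_all gr ten Z)).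
  by move=> *; apply: tensor_mul_assoc_pure; eassumption.
- move=> a b c X Y Z.
  apply: (tensor_grading_trilinear_ext (ktrilinear_compl lbr lbr)
    (ktrilinear_addZ _ (ktrilinear_compr lbr lbr) (ktrilinear_compl_swap lbr lbr))).
  move=> a1 b1 a2 b2 a3 b3 x1 y1 x2 y2 x3 y3 hx1 hy1 hx2 hy2 hx3 hy3 <- <-.
  exact: tensor_leibniz_pure hx1 hy1 hx2 hy2 hx3 hy3.
- move=> a b c X Y Z.
  apply: (tensor_grading_trilinear_ext (ktrilinear_compl lbr lmul)
    (ktrilinear_addZ _ (ktrilinear_compr lmul lbr) (ktrilinear_compl_swap lmul lbr))).
  move=> a1 b1 a2 b2 a3 b3 x1 y1 x2 y2 x3 y3 hx1 hy1 hx2 hy2 hx3 hy3 <- <-.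
  exact: tensor_poisson_pure hx1 hy1 hx2 hy2 hx3 hy3.
Qed.

End TensorLPcolor.

Unset Implicit Arguments.

Theorem mainTheorem17 (G : zmodType) (K : fieldType) (eps : G -> G -> K)
    (A : lmodType K) (HA : G -> A -> Prop)
    (mulA : A -> A -> A) (br3 : A -> A -> A -> A)
    (T : lmodType K) (t : A -> A -> T) :
  (2%:R : K) != 0 ->
  skew_bichar eps ->
  TLPcolor HA eps mulA br3 ->
  is_tensor t ->
  exists mul br : T -> T -> T,
    (forall a b a' b' x y x' y',
        HA a x -> HA b y -> HA a' x' -> HA b' y' ->
        mul (t x y) (t x' y') = eps b a' *: t (mulA x x') (mulA y y') /\
        br (t x y) (t x' y') =
          t x (br3 y x' y') + eps b (a' + b') *: t (br3 x x' y') y) /\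
    LPcolor (tensor_grading HA t) eps mul br.
Proof.
move=> _ es tl ten.
have [mul [lmul mulE]] := tensor_mul_exists tl ten.
have [br [lbr brE]] := tensor_br_exists tl ten.
exists mul, br; split; last exact: tensor_LPcolor es tl ten lmul lbr mulE brE.
move=> a b a' b' x y x' y' hx hy hx' hy'.
by rewrite (mulE _ _ _ _ _ _ _ _ hx hy hx' hy') (brE _ _ _ _ _ _ _ _ hx hy hx' hy').
Qed.
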